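(* Let $X\in\mathbb{R}^{n\times p}$, $\beta_0\in\mathbb{R}^p$ with support $\{1,\dots,s\}$, $\lambda_0>0$, $\lambda>0$, $c_1\in[0,1)$ and $\kappa_0>0$. Assume $p_\lambda:[0,\infty)\to[0,\infty)$ is continuously differentiable on $(0,\infty)$, increasing and concave, with $p_\lambda(0)=0$, $p_\lambda(\infty)=\lim_{t\to\infty}p_\lambda(t)<\infty$, $p_\lambda'\{(1-c_1)\lambda\}\le\lambda_0/4$, and $\min_{1\le j\le s}|\beta_{0,j}|>\max\{(1-c_1)\lambda,\,2\kappa_0^{-1}p_\lambda^{1/2}(\infty)\}$. Assume $\min\{n^{-1/2}\|Xv\|_2:\|v\|_2=1,\|v\|_0<2s\}\ge\kappa_0$. Let $\widehat\beta\in\mathbb{R}^p$ be any vector each of whose components is either $0$ or of magnitude larger than $(1-c_1)\lambda$, and let $\delta=\widehat\beta-\beta_0$. Then $$\sum_{j=1}^p p_\lambda(|\beta_{0,j}|)-\sum_{j=1}^p p_\lambda(|\widehat\beta_j|)\le (4n)^{-1}\|X\delta\|_2^2+\tfrac14\lambda_0\|\delta\|_1.$$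
   Context: $\|v\|_0$ denotes the number of nonzero entries of $v$. *)

From Stdlib Require Import Reals.
Open Scope R_scope.

(* Vectors in R^m are functions nat -> R, only indices 0..m-1 matter
   (coordinate j+1 of the paper is index j here).  Matrices in R^{n x p}
   are functions nat -> nat -> R, entry (i,j) with i < n, j < p. *)

Fixpoint rsum (m : nat) (f : nat -> R) : R :=
  match m with
  | O => 0
  | S k => rsum k f + f k
  end.

Fixpoint l0norm (m : nat) (v : nat -> R) : nat :=
  match m with
  | O => O
  | S k => (l0norm k v + (if Req_EM_T (v k) 0 then 0 else 1))%nat
  end.

Definition l1norm (m : nat) (v : nat -> R) : R := rsum m (fun j => Rabs (v j)).
Definition sqnorm2 (m : nat) (v : nat -> R) : R := rsum m (fun j => v j * v j).
Definition l2norm (m : nat) (v : nat -> R) : R := sqrt (sqnorm2 m v).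

Definition matvec (p : nat) (X : nat -> nat -> R) (v : nat -> R) : nat -> R :=
  fun i => rsum p (fun j => X i j * v j).

(* Split on the sparsity of delta = betahat - beta0.  Concavity makes the penalty
   (lambda0/4)-Lipschitz above the threshold c = (1 - c1) lambda, which controls every
   coordinate where beta0 and betahat are both nonzero.  If ||delta||_0 < 2s, a support
   coordinate killed by betahat costs at most p(oo) <= kappa0^2 beta0_j^2 / 4, paid for by the
   restricted eigenvalue bound kappa0^2 n ||delta||_2^2 <= ||X delta||_2^2.  If ||delta||_0 >= 2s,
   betahat has at least s nonzero coordinates off the support, each gaining at least p(c),
   which repays the at most s killed support coordinates, each costing at most p(c) plus a
   Lipschitz term. *)

From Stdlib Require Import Reals Lra Lia.
Open Scope R_scope.

Lemma rsum_le m f g :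
  (forall j, (j < m)%nat -> f j <= g j) -> rsum m f <= rsum m g.
Proof.
  induction m as [|m IH]; simpl; intros H; [lra|].
  assert (f m <= g m) by (apply H; lia).
  assert (rsum m f <= rsum m g) by (apply IH; intros; apply H; lia).
  lra.
Qed.

Lemma rsum_ext m f g : (forall j, (j < m)%nat -> f j = g j) -> rsum m f = rsum m g.
Proof.
  intros H; apply Rle_antisym; apply rsum_le; intros j Hj; rewrite H by exact Hj; lra.
Qed.

Lemma rsum_plus m f g : rsum m (fun j => f j + g j) = rsum m f + rsum m g.
Proof. induction m as [|m IH]; simpl; [lra|]. rewrite IH; lra. Qed.

Lemma rsum_minus m f g : rsum m (fun j => f j - g j) = rsum m f - rsum m g.
Proof. induction m as [|m IH]; simpl; [lra|]. rewrite IH; lra. Qed.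

Lemma rsum_scal m k f : rsum m (fun j => k * f j) = k * rsum m f.
Proof. induction m as [|m IH]; simpl; [lra|]. rewrite IH; lra. Qed.

Lemma sqnorm2_nonneg m v : 0 <= sqnorm2 m v.
Proof.
  induction m as [|m IH]; unfold sqnorm2 in *; simpl; [lra|].
  pose proof (Rle_0_sqr (v m)); unfold Rsqr in *; lra.
Qed.

Lemma sqnorm2_scal m k v : sqnorm2 m (fun j => k * v j) = k * k * sqnorm2 m v.
Proof. unfold sqnorm2; rewrite <- rsum_scal; apply rsum_ext; intros; ring. Qed.

Lemma l2norm_scal m k v : 0 <= k -> l2norm m (fun j => k * v j) = k * l2norm m v.
Proof.
  intros Hk; unfold l2norm; rewrite sqnorm2_scal, sqrt_mult, sqrt_square;
    auto using sqnorm2_nonneg; nra.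
Qed.

Lemma l2norm_sqr m v : l2norm m v * l2norm m v = sqnorm2 m v.
Proof. apply sqrt_sqrt, sqnorm2_nonneg. Qed.

Lemma matvec_scal p X k v i : matvec p X (fun j => k * v j) i = k * matvec p X v i.
Proof. unfold matvec; rewrite <- rsum_scal; apply rsum_ext; intros; ring. Qed.

Lemma l0norm_scal m k v : k <> 0 -> l0norm m (fun j => k * v j) = l0norm m v.
Proof.
  intros Hk; induction m as [|m IH]; simpl; [reflexivity|]; rewrite IH.
  destruct (Req_EM_T (k * v m) 0) as [E|E], (Req_EM_T (v m) 0) as [E'|E']; auto.
  - destruct (Rmult_integral _ _ E); contradiction.
  - rewrite E', Rmult_0_r in E; contradiction.
Qed.

Definition nonzero_ind (x : R) : R := if Req_EM_T x 0 then 0 else 1.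

Lemma l0norm_INR m v : INR (l0norm m v) = rsum m (fun j => nonzero_ind (v j)).
Proof.
  induction m as [|m IH]; simpl; [reflexivity|].
  rewrite plus_INR, IH; unfold nonzero_ind; destruct Req_EM_T; simpl; lra.
Qed.

Lemma l0norm_support p s v :
  (s <= p)%nat -> (forall j, (j < p)%nat -> (v j <> 0 <-> (j < s)%nat)) ->
  l0norm p v = s.
Proof.
  intros Hsp Hsupp.
  enough (Hmin : forall m, (m <= p)%nat -> l0norm m v = Nat.min s m)
    by (rewrite Hmin; lia).
  induction m as [|m IH]; intros Hm; simpl; [lia|].
  rewrite IH by lia; destruct (Req_EM_T (v m) 0) as [E|E].
  - assert (~ (m < s)%nat) by (rewrite <- (Hsupp m) by lia; tauto); lia.
  - assert (m < s)%nat by (apply Hsupp; [lia|exact E]); lia.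
Qed.

Definition slope (f : R -> R) (x y : R) : R := (f y - f x) / (y - x).

Section ConcavePenalty.

Variable pen : R -> R.
Hypothesis pen_concave : forall x y t, 0 <= x -> 0 <= y -> 0 <= t <= 1 ->
  t * pen x + (1 - t) * pen y <= pen (t * x + (1 - t) * y).

Lemma concave_chord x y z : 0 <= x -> x < y -> y < z ->
  (z - y) * pen x + (y - x) * pen z <= (z - x) * pen y.
Proof.
  intros Hx Hxy Hyz. set (t := (z - y) / (z - x)).
  assert (Ht : 0 <= t <= 1).
  { unfold t; split.
    - apply Rmult_le_pos; [|apply Rlt_le, Rinv_0_lt_compat]; lra.
    - apply Rmult_le_reg_r with (z - x); [lra|].
      unfold Rdiv; rewrite Rmult_assoc, Rinv_l; lra. }
  assert (Hy : t * x + (1 - t) * z = y) by (unfold t; field; lra).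
  pose proof (pen_concave x z t Hx ltac:(lra) Ht) as Hc; rewrite Hy in Hc.
  replace (z - y) with (t * (z - x)) by (unfold t; field; lra).
  replace (y - x) with ((1 - t) * (z - x)) by (unfold t; field; lra).
  nra.
Qed.

Lemma slope_antitone_l x y z : 0 <= x -> x <= y -> y < z ->
  slope pen y z <= slope pen x z.
Proof.
  intros Hx Hxy Hyz; destruct (Req_dec x y) as [<-|Hne]; [lra|].
  pose proof (concave_chord x y z Hx ltac:(lra) Hyz).
  unfold slope; apply Rmult_le_reg_r with ((z - y) * (z - x)); [nra|].
  field_simplify; lra.
Qed.

Lemma slope_antitone_r x y z : 0 <= x -> x < y -> y <= z ->
  slope pen x z <= slope pen x y.
Proof.
  intros Hx Hxy Hyz; destruct (Req_dec y z) as [<-|Hne]; [lra|].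
  pose proof (concave_chord x y z Hx Hxy ltac:(lra)).
  unfold slope; apply Rmult_le_reg_r with ((z - x) * (y - x)); [nra|].
  field_simplify; lra.
Qed.

Lemma concave_slope_le_deriv c d a b : 0 < c -> derivable_pt_lim pen c d ->
  c <= a -> a < b -> slope pen a b <= d.
Proof.
  intros Hc Hd Hca Hab; apply Rnot_lt_le; intros Hlt.
  destruct (Hd (slope pen a b - d) ltac:(lra)) as [del Hdel].
  pose proof (cond_pos del) as Hdel0.
  set (h := Rmin (del / 2) ((b - c) / 2)).
  assert (Hh : 0 < h) by (apply Rmin_pos; lra).
  assert (h <= del / 2) by apply Rmin_l.
  assert (h <= (b - c) / 2) by apply Rmin_r.
  specialize (Hdel h ltac:(lra) ltac:(rewrite Rabs_right; lra)).
  apply Rabs_def2 in Hdel.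
  pose proof (slope_antitone_l c a b ltac:(lra) Hca Hab).
  pose proof (slope_antitone_r c (c + h) b ltac:(lra) ltac:(lra) ltac:(lra)) as Hr.
  unfold slope in *; replace (c + h - c) with h in Hr by ring.
  lra.
Qed.

Hypothesis pen_incr : forall x y, 0 <= x -> x <= y -> pen x <= pen y.

Lemma concave_lipschitz_above c d L : 0 < c -> derivable_pt_lim pen c d ->
  d <= L -> 0 <= L ->
  forall a b, c <= a -> c <= b -> pen b - pen a <= L * Rabs (b - a).
Proof.
  intros Hc Hd HdL HL a b Ha Hb.
  pose proof (Rabs_pos (b - a)).
  destruct (Rle_lt_dec b a) as [Hba|Hab].
  - pose proof (pen_incr b a ltac:(lra) Hba); nra.
  - pose proof (concave_slope_le_deriv c d a b Hc Hd Ha Hab) as Hs.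
    unfold slope in Hs; rewrite Rabs_right by lra.
    replace (pen b - pen a) with (slope pen a b * (b - a)) by (unfold slope; field; lra).
    unfold slope; nra.
Qed.

End ConcavePenalty.

Lemma increasing_le_limit (f : R -> R) (l : R) :
  (forall x y, 0 <= x -> x <= y -> f x <= f y) ->
  (forall eps, 0 < eps -> exists M, forall t, M < t -> Rabs (f t - l) < eps) ->
  forall t, 0 <= t -> f t <= l.
Proof.
  intros Hincr Hlim t Ht; apply Rnot_lt_le; intros Hlt.
  destruct (Hlim (f t - l) ltac:(lra)) as [M HM].
  specialize (HM (Rmax t M + 1) ltac:(pose proof (Rmax_r t M); lra)).
  pose proof (Hincr t (Rmax t M + 1) Ht ltac:(pose proof (Rmax_l t M); lra)).
  apply Rabs_def2 in HM; lra.
Qed.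

Section RestrictedEigenvalue.

Variables (n p s : nat) (X : nat -> nat -> R) (kappa0 : R).
Hypothesis n_pos : (0 < n)%nat.
Hypothesis kappa0_pos : 0 < kappa0.
Hypothesis restricted_eigenvalue : forall v : nat -> R,
  l2norm p v = 1 -> (l0norm p v < 2 * s)%nat ->
  kappa0 <= / sqrt (INR n) * l2norm n (matvec p X v).

Lemma restricted_eigenvalue_sqnorm v : (l0norm p v < 2 * s)%nat ->
  kappa0 * kappa0 * INR n * sqnorm2 p v <= sqnorm2 n (matvec p X v).
Proof.
  intros Hv.
  assert (Hn : 0 < INR n) by (apply lt_0_INR; exact n_pos).
  pose proof (sqnorm2_nonneg n (matvec p X v)).
  destruct (Req_dec (sqnorm2 p v) 0) as [E|E]; [rewrite E; lra|].
  set (L := l2norm p v).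
  assert (HL : 0 < L) by (apply sqrt_lt_R0; pose proof (sqnorm2_nonneg p v); lra).
  set (u := fun j => / L * v j).
  assert (Hu1 : l2norm p u = 1).
  { unfold u; rewrite l2norm_scal by (apply Rlt_le, Rinv_0_lt_compat, HL).
    fold L; field; lra. }
  assert (HXu : l2norm n (matvec p X u) = / L * l2norm n (matvec p X v)).
  { rewrite <- l2norm_scal by (apply Rlt_le, Rinv_0_lt_compat, HL).
    unfold l2norm, sqnorm2; f_equal; apply rsum_ext; intros i _.
    unfold u; rewrite matvec_scal; reflexivity. }
  assert (Hu0 : (l0norm p u < 2 * s)%nat)
    by (unfold u; rewrite l0norm_scal by (apply Rinv_neq_0_compat; lra); exact Hv).
  pose proof (restricted_eigenvalue u Hu1 Hu0) as Hre; rewrite HXu in Hre.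
  assert (Hsn : 0 < sqrt (INR n)) by (apply sqrt_lt_R0, Hn).
  assert (Hlin : kappa0 * sqrt (INR n) * L <= l2norm n (matvec p X v)).
  { apply Rmult_le_compat_r with (r := sqrt (INR n) * L) in Hre; [|nra].
    replace (/ sqrt (INR n) * (/ L * l2norm n (matvec p X v)) * (sqrt (INR n) * L))
      with (l2norm n (matvec p X v)) in Hre by (field; lra).
    lra. }
  rewrite <- l2norm_sqr, <- (l2norm_sqr n), <- (sqrt_sqrt (INR n)) by lra.
  fold L.
  assert (Hpos : 0 <= kappa0 * sqrt (INR n) * L) by (apply Rmult_le_pos; nra).
  pose proof (Rmult_le_compat _ _ _ _ Hpos Hpos Hlin Hlin); nra.
Qed.

End RestrictedEigenvalue.

Lemma le_sqr_of_sqrt_lt P k a : 0 <= P -> 0 < k -> 2 / k * sqrt P < Rabs a ->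
  P <= k * k / 4 * (a * a).
Proof.
  intros HP Hk Ha.
  assert (Hs : sqrt P < k / 2 * Rabs a).
  { apply Rmult_lt_compat_l with (r := k / 2) in Ha; [|lra].
    replace (k / 2 * (2 / k * sqrt P)) with (sqrt P) in Ha by (field; lra); exact Ha. }
  pose proof (sqrt_pos P); pose proof (sqrt_sqrt P HP).
  pose proof (Rsqr_abs a); unfold Rsqr in *; nra.
Qed.

Section PenaltyGap.

Variables (pen : R -> R) (c L : R).
Hypothesis pen_0 : pen 0 = 0.
Hypothesis pen_nonneg : forall t, 0 <= t -> 0 <= pen t.
Hypothesis pen_incr : forall x y, 0 <= x -> x <= y -> pen x <= pen y.
Hypothesis pen_lipschitz : forall a b, c <= a -> c <= b -> pen b - pen a <= L * Rabs (b - a).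
Hypothesis c_pos : 0 < c.
Hypothesis L_nonneg : 0 <= L.

Section Coordinate.

Variables x y : R.
Hypothesis x_above : x <> 0 -> c < Rabs x.
Hypothesis y_thresholded : y = 0 \/ c < Rabs y.

Lemma penalty_gap_nonzero : x <> 0 -> y <> 0 ->
  pen (Rabs x) - pen (Rabs y) <= L * Rabs (y - x).
Proof.
  intros Hx Hy; destruct y_thresholded as [|Hy']; [contradiction|].
  eapply Rle_trans; [apply pen_lipschitz; pose proof (x_above Hx); lra|].
  apply Rmult_le_compat_l; [exact L_nonneg|].
  rewrite Rabs_minus_sym; apply Rabs_triang_inv2.
Qed.

Lemma penalty_gap_off_support : x = 0 ->
  pen (Rabs x) - pen (Rabs y) <= - pen c * nonzero_ind y.
Proof.
  intros ->; rewrite Rabs_R0, pen_0; unfold nonzero_ind.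
  destruct (Req_EM_T y 0) as [->|Hy].
  - rewrite Rabs_R0, pen_0; lra.
  - destruct y_thresholded as [|Hy']; [contradiction|].
    pose proof (pen_incr c (Rabs y) ltac:(lra) ltac:(lra)); lra.
Qed.

Lemma penalty_gap_sparse kappa pinf : 0 < kappa ->
  (forall t, 0 <= t -> pen t <= pinf) ->
  (x <> 0 -> 2 / kappa * sqrt pinf < Rabs x) ->
  pen (Rabs x) - pen (Rabs y) <= L * Rabs (y - x) + kappa * kappa / 4 * ((y - x) * (y - x)).
Proof.
  intros Hk Hpinf Hx.
  pose proof (Rabs_pos (y - x)); pose proof (Rle_0_sqr (y - x)); unfold Rsqr in *.
  assert (0 <= kappa * kappa / 4 * ((y - x) * (y - x))) by (apply Rmult_le_pos; nra).
  destruct (Req_dec x 0) as [Hx0|Hx0].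
  - pose proof (penalty_gap_off_support Hx0).
    pose proof (pen_nonneg c ltac:(lra)).
    unfold nonzero_ind in *; destruct Req_EM_T; nra.
  - destruct (Req_dec y 0) as [->|Hy0].
    + rewrite Rabs_R0, pen_0, Rminus_0_l.
      pose proof (Hpinf _ (Rabs_pos x)).
      pose proof (Hpinf 0 (Rle_refl 0)) as Hpinf0; rewrite pen_0 in Hpinf0.
      pose proof (le_sqr_of_sqrt_lt pinf kappa x ltac:(lra) Hk (Hx Hx0)).
      pose proof (Rabs_pos (- x)).
      replace (- x * - x) with (x * x) by ring; nra.
    + pose proof (penalty_gap_nonzero Hx0 Hy0); lra.
Qed.

(* The weight of pen c is chosen to sum to 2 ||x||_0 - ||y - x||_0, which is <= 0 when y - x is dense. *)
Lemma penalty_gap_dense :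
  pen (Rabs x) - pen (Rabs y) <=
  L * Rabs (y - x) + pen c * (2 * nonzero_ind x - nonzero_ind (y - x)).
Proof.
  pose proof (Rabs_pos (y - x)); pose proof (pen_nonneg c ltac:(lra)).
  destruct (Req_dec x 0) as [Hx0|Hx0].
  - pose proof (penalty_gap_off_support Hx0); subst x.
    rewrite Rminus_0_r in *; unfold nonzero_ind in *.
    destruct (Req_EM_T 0 0); [|contradiction]; destruct (Req_EM_T y 0); nra.
  - assert (Hnz : nonzero_ind x = 1)
      by (unfold nonzero_ind; destruct Req_EM_T; [contradiction|reflexivity]).
    rewrite Hnz.
    assert (Hnz1 : nonzero_ind (y - x) <= 1)
      by (unfold nonzero_ind; destruct Req_EM_T; lra).
    assert (0 <= pen c * (1 - nonzero_ind (y - x))) by (apply Rmult_le_pos; lra).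
    destruct (Req_dec y 0) as [->|Hy0].
    + assert (Hc : pen (Rabs x) - pen c <= L * Rabs (Rabs x - c))
        by (apply pen_lipschitz; pose proof (x_above Hx0); lra).
      rewrite (Rabs_right (Rabs x - c)) in Hc by (pose proof (x_above Hx0); lra).
      rewrite Rabs_R0, pen_0.
      replace (Rabs (0 - x)) with (Rabs x) by (rewrite Rminus_0_l, Rabs_Ropp; reflexivity).
      pose proof (Rmult_le_pos L c L_nonneg ltac:(lra)); lra.
    + pose proof (penalty_gap_nonzero Hx0 Hy0); lra.
Qed.

End Coordinate.

Variables (p : nat) (x y : nat -> R).
Hypothesis x_above_all : forall j, (j < p)%nat -> x j <> 0 -> c < Rabs (x j).
Hypothesis y_thresholded_all : forall j, (j < p)%nat -> y j = 0 \/ c < Rabs (y j).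

Lemma penalty_gap_sum_sparse kappa pinf : 0 < kappa ->
  (forall t, 0 <= t -> pen t <= pinf) ->
  (forall j, (j < p)%nat -> x j <> 0 -> 2 / kappa * sqrt pinf < Rabs (x j)) ->
  rsum p (fun j => pen (Rabs (x j))) - rsum p (fun j => pen (Rabs (y j))) <=
  L * l1norm p (fun j => y j - x j) + kappa * kappa / 4 * sqnorm2 p (fun j => y j - x j).
Proof.
  intros Hk Hpinf Hx.
  unfold l1norm, sqnorm2; rewrite <- rsum_minus, <- !rsum_scal, <- rsum_plus.
  apply rsum_le; intros j Hj.
  apply (penalty_gap_sparse (x j) (y j) (x_above_all j Hj) (y_thresholded_all j Hj) kappa pinf); auto.
Qed.

Lemma penalty_gap_sum_dense :
  (2 * l0norm p x <= l0norm p (fun j => (y j - x j)%R))%nat ->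
  rsum p (fun j => pen (Rabs (x j))) - rsum p (fun j => pen (Rabs (y j))) <=
  L * l1norm p (fun j => y j - x j).
Proof.
  intros Hl0.
  apply Rle_trans with (rsum p (fun j =>
    L * Rabs (y j - x j) + pen c * (2 * nonzero_ind (x j) - nonzero_ind (y j - x j)))).
  { rewrite <- rsum_minus; apply rsum_le; intros j Hj; apply penalty_gap_dense; auto. }
  rewrite rsum_plus, !rsum_scal, rsum_minus, rsum_scal, <- !l0norm_INR.
  fold (l1norm p (fun j => y j - x j)).
  apply le_INR in Hl0; rewrite mult_INR in Hl0; simpl in Hl0.
  pose proof (pen_nonneg c ltac:(lra)); nra.
Qed.

End PenaltyGap.


Theorem mainTheorem6
  (n p s : nat) (X : nat -> nat -> R) (beta0 : nat -> R)
  (lambda0 lambda c1 kappa0 : R)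
  (pen pen' : R -> R) (pinf : R) (betahat : nat -> R)
  (Hn : (0 < n)%nat)
  (Hsp : (s <= p)%nat)
  (Hsupp : forall j, (j < p)%nat -> (beta0 j <> 0 <-> (j < s)%nat))
  (Hl0 : 0 < lambda0) (Hl : 0 < lambda)
  (Hc1 : 0 <= c1 < 1) (Hk0 : 0 < kappa0)
  (Hnonneg : forall t, 0 <= t -> 0 <= pen t)
  (Hderiv : forall t, 0 < t -> derivable_pt_lim pen t (pen' t))
  (Hderivcont : forall t, 0 < t -> continuity_pt pen' t)
  (Hincr : forall x y, 0 <= x -> x <= y -> pen x <= pen y)
  (Hconc : forall x y t, 0 <= x -> 0 <= y -> 0 <= t <= 1 ->
             t * pen x + (1 - t) * pen y <= pen (t * x + (1 - t) * y))
  (Hpen0 : pen 0 = 0)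
  (Hlim : forall eps, 0 < eps -> exists M, forall t, M < t -> Rabs (pen t - pinf) < eps)
  (Hderivbound : pen' ((1 - c1) * lambda) <= lambda0 / 4)
  (Hmin : forall j, (j < s)%nat ->
            Rmax ((1 - c1) * lambda) (2 / kappa0 * sqrt pinf) < Rabs (beta0 j))
  (HRE : forall v : nat -> R, l2norm p v = 1 -> (l0norm p v < 2 * s)%nat ->
            kappa0 <= / sqrt (INR n) * l2norm n (matvec p X v))
  (Hhat : forall j, (j < p)%nat -> betahat j = 0 \/ (1 - c1) * lambda < Rabs (betahat j)) :
  let delta := fun j => betahat j - beta0 j in
  rsum p (fun j => pen (Rabs (beta0 j))) - rsum p (fun j => pen (Rabs (betahat j)))
    <= / (4 * INR n) * sqnorm2 n (matvec p X delta) + / 4 * lambda0 * l1norm p delta.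
Proof.
  intros delta; set (c := (1 - c1) * lambda) in *.
  assert (Hc : 0 < c) by (unfold c; nra).
  assert (Hlip := concave_lipschitz_above pen Hconc Hincr c (pen' c) (lambda0 / 4)
                    Hc (Hderiv c Hc) Hderivbound ltac:(lra)).
  assert (Hbeta0 : forall j, (j < p)%nat -> beta0 j <> 0 ->
            c < Rabs (beta0 j) /\ 2 / kappa0 * sqrt pinf < Rabs (beta0 j))
    by (intros j Hj Hb; apply Rmax_Rlt, Hmin, Hsupp; assumption).
  assert (Hn' : 0 < INR n) by (apply lt_0_INR, Hn).
  destruct (Compare_dec.lt_dec (l0norm p delta) (2 * s)) as [Hsparse|Hdense].
  - pose proof (restricted_eigenvalue_sqnorm n p s X kappa0 Hn Hk0 HRE delta Hsparse) as Hre.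
    apply Rmult_le_compat_l with (r := / (4 * INR n)) in Hre;
      [|apply Rlt_le, Rinv_0_lt_compat; lra].
    replace (/ (4 * INR n) * (kappa0 * kappa0 * INR n * sqnorm2 p delta))
      with (kappa0 * kappa0 / 4 * sqnorm2 p delta) in Hre by (field; lra).
    pose proof (penalty_gap_sum_sparse pen c (lambda0 / 4) Hpen0 Hnonneg Hincr Hlip Hc
      ltac:(lra) p beta0 betahat (fun j Hj Hb => proj1 (Hbeta0 j Hj Hb)) Hhat kappa0 pinf
      Hk0 (increasing_le_limit pen pinf Hincr Hlim) (fun j Hj Hb => proj2 (Hbeta0 j Hj Hb))) as Hgap.
    fold delta in Hgap; lra.
  - assert (HQ : 0 <= / (4 * INR n) * sqnorm2 n (matvec p X delta))
      by (apply Rmult_le_pos; [apply Rlt_le, Rinv_0_lt_compat; lra | apply sqnorm2_nonneg]).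
    rewrite <- (l0norm_support p s beta0 Hsp Hsupp) in Hdense.
    pose proof (penalty_gap_sum_dense pen c (lambda0 / 4) Hpen0 Hnonneg Hincr Hlip Hc
      ltac:(lra) p beta0 betahat (fun j Hj Hb => proj1 (Hbeta0 j Hj Hb)) Hhat
      (proj1 (Nat.nlt_ge _ _) Hdense)) as Hgap.
    fold delta in Hgap; lra.
Qed.
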